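(* Let $k\geq 2$ be an integer and let $l\in\{1,2\}$. Then there are infinitely many balanced bipartite graphs $G$ with $\delta(G)=k$ and $f(G)=\frac{|V(G)|}{2}+l$.
   Context: All graphs are finite and simple. A balanced bipartite graph is a bipartite graph with a given bipartition $(V_1,V_2)$ where $|V_1|=|V_2|$. $\delta(G)$ denotes the minimum degree of $G$. The forest number $f(G)$ is the maximum cardinality of a subset $S\subseteq V(G)$ such that the induced subgraph $G[S]$ is a forest. *)

From mathcomp Require Import all_boot.
Set Implicit Arguments. Unset Strict Implicit. Unset Printing Implicit Defensive.

Definition simple_graph (T : finType) (e : rel T) : Prop :=
  symmetric e /\ irreflexive e.

Definition balanced_bipartite (T : finType) (e : rel T) (V1 V2 : {set T}) : Prop :=
  [/\ [disjoint V1 & V2], V1 :|: V2 = [set: T], #|V1| = #|V2| &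
      forall x y, e x y -> (x \in V1) && (y \in V2) || (x \in V2) && (y \in V1)].

Definition deg (T : finType) (e : rel T) (x : T) : nat := #|[set y | e x y]|.

Definition min_degree_eq (T : finType) (e : rel T) (k : nat) : Prop :=
  (forall x, k <= deg e x) /\ (exists x, deg e x = k).

Definition induced_forest (T : finType) (e : rel T) (S : {set T}) : Prop :=
  ~ (exists c : seq T, [&& uniq c, 3 <= size c, all (mem S) c & cycle e c]).

Definition forest_number_eq (T : finType) (e : rel T) (m : nat) : Prop :=
  (exists S : {set T}, induced_forest e S /\ #|S| = m) /\
  (forall S : {set T}, induced_forest e S -> #|S| <= m).

(* Take the complete bipartite graph between the core [l, m) and the right
   side [m, 2m), and join each of l pendant left vertices to its own block of
   k right vertices.  The pendant vertices have degree k, all others more.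
   The pendant vertices together with the right side induce a union of stars,
   since every right vertex has at most one pendant neighbour: a forest of
   size m + l.  Conversely, two core and two right vertices span a 4-cycle, so
   a forest meets the core or the right side in at most one vertex; to exceed
   m + l it would have to contain a core vertex, all pendant vertices and the
   whole right side, and then the first pendant vertex, the core vertex and two
   vertices of the pendant's block again span a 4-cycle. *)

From mathcomp Require Import all_boot zify.
Set Implicit Arguments. Unset Strict Implicit. Unset Printing Implicit Defensive.

Lemma eqn_div_bounds j d q : 0 < d -> (j %/ d == q) = (q * d <= j < q * d + d).
Proof.
by move=> d_gt0; rewrite eqn_leq -ltnS ltn_divLR // leq_divRL // mulSn addnC andbC.
Qed.

Lemma setI_card_subset (T : finType) (S B : {set T}) :
  #|B| <= #|S :&: B| -> B \subset S.
Proof. by move=> le_B_SB; apply/setIidPr/eqP; rewrite eqEcard subsetIr. Qed.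

Definition ord_range n a b : {set 'I_n} := [set i : 'I_n | a <= i < b].

Lemma card_ord_range n a b : b <= n -> #|ord_range n a b| = b - a.
Proof.
move=> le_bn; rewrite -sum1dep_card -(big_mkord (fun i => a <= i < b) (fun=> 1)).
rewrite -big_nat_widen // (eq_bigl (fun i => true && (a <= i))) //.
by rewrite -big_nat_widenl // sum_nat_const_nat muln1.
Qed.

Lemma cycle_neighbours (T : eqType) (e : rel T) (c : seq T) x :
  x \in c -> uniq c -> 2 < size c -> cycle e c ->
  exists a b, [/\ a \in c, b \in c, a != b, e x a & e b x].
Proof.
case/rot_to=> i s rot_c.
rewrite -(rot_uniq i) -(size_rot i) -(rot_cycle i) rot_c.
case: s rot_c => [|a [|z r]] // rot_c /and3P[_ a_r _] _.
rewrite /= rcons_path => /and4P[xa _ _ bx].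
have zr_c : {subset z :: r <= c}.
  by move=> y y_zr; rewrite -(mem_rot i) rot_c; do 2!apply: mem_behead.
exists a, (last z r); split=> //.
- by rewrite -(mem_rot i) rot_c !inE eqxx orbT.
- exact/zr_c/mem_last.
- by apply: contraNneq a_r => ->; apply: mem_last.
Qed.

Section InducedForests.
Variables (T : finType) (e : rel T).
Hypothesis e_simple : simple_graph e.

Lemma edge_neq x y : e x y -> x != y.
Proof. by case: e_simple => _ irr; apply: contraTneq => ->; rewrite irr. Qed.

Lemma induced_forest_cover (S Y : {set T}) :
  (forall x y, e x y -> (x \in Y) || (y \in Y)) ->
  {in Y, forall y, {in S &, forall a b, e y a -> e y b -> a = b}} ->
  induced_forest e S.
Proof.
case: e_simple => e_sym _ Y_cover Y_star [[//|x s] /and4P[u sz /allP cS cyc]].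
have x_s : x \in x :: s := mem_head x s.
have [y y_s Yy] : exists2 y, y \in x :: s & y \in Y.
  have := next_cycle cyc x_s; case/Y_cover/orP; first by exists x.
  by exists (next (x :: s) x); rewrite ?mem_next.
have [a [b [a_s b_s ab ya by_]]] := cycle_neighbours y_s u sz cyc.
rewrite e_sym in by_; move: ab.
by rewrite (Y_star y Yy a b (cS a a_s) (cS b b_s) ya by_) eqxx.
Qed.

Lemma K22_not_induced_forest (S : {set T}) x1 x2 y1 y2 :
  x1 != x2 -> y1 != y2 -> all (mem S) [:: x1; x2; y1; y2] ->
  e x1 y1 -> e x1 y2 -> e x2 y1 -> e x2 y2 -> ~ induced_forest e S.
Proof.
case: e_simple => e_sym _ x12 y12 S4 e11 e12 e21 e22; apply.
exists [:: x1; y1; x2; y2]; apply/and4P; split=> //; last first.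
- by rewrite /= e11 e22 (e_sym y2) e12 (e_sym y1) e21.
- by move: S4; rewrite /= !andbT => /and4P[-> -> -> ->].
by rewrite /= !inE !negb_or eq_sym x12 y12 !edge_neq // e_sym.
Qed.
End InducedForests.

Section Construction.
Variables k l m : nat.

(* Vertices [0, m) form the left side and [m, 2m) the right side; a pendant
   vertex [x < l] is joined to the right vertices [m + x k, m + x k + k). *)
Definition cross_adj (x y : nat) : bool :=
  [&& x < m, m <= y & (l <= x) || ((y - m) %/ k == x)].

Definition bip_adj (x y : 'I_(m + m)) : bool := cross_adj x y || cross_adj y x.

Local Notation X := (ord_range (m + m) 0 m).
Local Notation Y := (ord_range (m + m) m (m + m)).
Local Notation A := (ord_range (m + m) 0 l).
Local Notation C := (ord_range (m + m) l m).

Lemma card_X : #|X| = m. Proof. by rewrite card_ord_range ?leq_addr ?subn0. Qed.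
Lemma card_Y : #|Y| = m. Proof. by rewrite card_ord_range ?addnK. Qed.

Lemma bip_adj_simple : simple_graph bip_adj.
Proof. by split=> [x y | x]; rewrite /bip_adj ?orbb 1?orbC // /cross_adj; lia. Qed.

Lemma bip_adj_balanced : balanced_bipartite bip_adj X Y.
Proof.
split; rewrite ?card_X ?card_Y //.
- by rewrite disjoint_subset; apply/subsetP => x; rewrite !inE; lia.
- by apply/setP => x; rewrite !inE; have := ltn_ord x; lia.
- move=> x y; rewrite !inE /bip_adj /cross_adj.
  by have := ltn_ord x; have := ltn_ord y; lia.
Qed.

Hypotheses (k_gt1 : 1 < k) (l_gt0 : 0 < l) (lk_le_m : l * k <= m) (lDk_le_m : l + k <= m).

Lemma pendant_block_le x : x < l -> x * k + k <= m.
Proof.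
move=> x_lt_l; have : x.+1 * k <= l * k by rewrite leq_mul2r x_lt_l orbT.
by rewrite mulSn; lia.
Qed.

Lemma bip_adj_pendant (x y : 'I_(m + m)) :
  x < l -> bip_adj x y = (m + x * k <= y < m + x * k + k).
Proof.
move=> x_lt_l; have := pendant_block_le x_lt_l.
by rewrite /bip_adj /cross_adj eqn_div_bounds; lia.
Qed.

Lemma deg_pendant (x : 'I_(m + m)) : x < l -> deg bip_adj x = k.
Proof.
move=> x_lt_l; have := pendant_block_le x_lt_l => block_le.
rewrite /deg -[k](addKn (m + x * k)) -(@card_ord_range (m + m)); last lia.
by apply: eq_card => y; rewrite !inE bip_adj_pendant.
Qed.

Lemma deg_ge (x : 'I_(m + m)) : k <= deg bip_adj x.
Proof.
have [x_lt_l | l_le_x] := ltnP x l; first by rewrite deg_pendant.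
have [x_lt_m | m_le_x] := ltnP x m.
  apply: (@leq_trans #|Y|); first by rewrite card_Y; lia.
  apply: subset_leq_card; apply/subsetP => y.
  by rewrite !inE /bip_adj /cross_adj; lia.
apply: (@leq_trans #|C|); first by rewrite card_ord_range ?leq_addr //; lia.
apply: subset_leq_card; apply/subsetP => y; rewrite !inE /bip_adj /cross_adj.
by have := ltn_ord x; lia.
Qed.

Lemma bip_adj_min_degree : min_degree_eq bip_adj k.
Proof.
split; first exact: deg_ge.
have m_gt0 : 0 < m + m by lia.
by exists (Ordinal m_gt0); rewrite deg_pendant.
Qed.

Lemma bip_adj_core (x y : 'I_(m + m)) : x \in C -> y \in Y -> bip_adj x y.
Proof. by rewrite !inE /bip_adj /cross_adj; lia. Qed.

Lemma pendant_forest : induced_forest bip_adj (A :|: Y).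
Proof.
apply: (induced_forest_cover bip_adj_simple (Y := Y)).
  move=> x y; rewrite !inE /bip_adj /cross_adj.
  by have := ltn_ord x; have := ltn_ord y; lia.
move=> y; rewrite !inE => Yy a b; rewrite !inE => Sa Sb ya yb; apply: ord_inj.
by move: ya yb; rewrite /bip_adj /cross_adj; lia.
Qed.

Lemma card_pendant_forest : #|A :|: Y| = m + l.
Proof.
have -> : A :|: Y = ~: C by apply/setP => y; rewrite !inE; have := ltn_ord y; lia.
by have := cardsC C; rewrite card_ord card_ord_range ?leq_addr //; lia.
Qed.

Lemma card_le_parts (S : {set 'I_(m + m)}) :
  #|S| <= #|S :&: A| + #|S :&: C| + #|S :&: Y|.
Proof.
have cover : S \subset (S :&: A) :|: (S :&: C) :|: (S :&: Y).
  by apply/subsetP => y Sy; rewrite !inE Sy /=; have := ltn_ord y; lia.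
apply: leq_trans (subset_leq_card cover) _.
by apply: leq_trans (leq_card_setU _ _) _; rewrite leq_add2r leq_card_setU.
Qed.

Lemma core_or_Y_small (S : {set 'I_(m + m)}) :
  induced_forest bip_adj S -> #|S :&: C| <= 1 \/ #|S :&: Y| <= 1.
Proof.
move=> forest; have [|/card_gt1P[x1 [x2 [SCx1 SCx2 x12]]]] := leqP #|S :&: C| 1.
  by left.
right; rewrite leqNgt; apply/negP => /card_gt1P[y1 [y2 [SYy1 SYy2 y12]]].
move: SCx1 SCx2 SYy1 SYy2; rewrite !in_setI.
move=> /andP[Sx1 Cx1] /andP[Sx2 Cx2] /andP[Sy1 Yy1] /andP[Sy2 Yy2].
apply: (K22_not_induced_forest bip_adj_simple x12 y12) forest;
  by rewrite /= ?Sx1 ?Sx2 ?Sy1 ?Sy2 ?bip_adj_core.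
Qed.

Lemma core_pendant_not_forest (S : {set 'I_(m + m)}) x :
  x \in S :&: C -> A :|: Y \subset S -> ~ induced_forest bip_adj S.
Proof.
rewrite in_setI => /andP[Sx Cx] /subsetP AYS forest.
have v0_lt : 0 < m + m by lia.
have y0_lt : m < m + m by lia.
have y1_lt : m.+1 < m + m by lia.
apply: (K22_not_induced_forest bip_adj_simple (x1 := Ordinal v0_lt) (x2 := x)
          (y1 := Ordinal y0_lt) (y2 := Ordinal y1_lt)) forest.
- by apply: contraTneq Cx => <-; rewrite inE /= leqNgt l_gt0.
- by rewrite -val_eqE /= neq_ltn ltnSn.
- apply/allP => z; rewrite !inE; case/or4P => /eqP->;
    by rewrite ?Sx // AYS // !inE /=; lia.
- by rewrite bip_adj_pendant //=; lia.
- by rewrite bip_adj_pendant //=; lia.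
- by rewrite bip_adj_core // inE /=; lia.
- by rewrite bip_adj_core // inE /=; lia.
Qed.

Lemma forest_card_le (S : {set 'I_(m + m)}) :
  induced_forest bip_adj S -> #|S| <= m + l.
Proof.
move=> forest; have card_S := card_le_parts S.
have card_SI B : #|S :&: B| <= #|B| by rewrite subset_leq_card ?subsetIr.
have SA := card_SI A; have SC := card_SI C; have SY := card_SI Y.
rewrite card_Y !card_ord_range ?leq_addr // in SA SC SY; last lia.
case: (core_or_Y_small forest) => small; last lia.
rewrite leqNgt; apply/negP => big.
have AS : A \subset S by apply: setI_card_subset; rewrite card_ord_range; lia.
have YS : Y \subset S by apply: setI_card_subset; rewrite card_Y; lia.
have /card_gt0P[x SCx] : 0 < #|S :&: C| by lia.
by apply: core_pendant_not_forest SCx _ forest; rewrite subUset AS.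
Qed.

Lemma bip_adj_forest_number : forest_number_eq bip_adj (m + l).
Proof.
split; last exact: forest_card_le.
by exists (A :|: Y); split; [exact: pendant_forest | exact: card_pendant_forest].
Qed.
End Construction.

Theorem theorem2p7 (k l : nat) (hk : 2 <= k) (hl : (l == 1) || (l == 2)) :
  forall N : nat, exists n : nat, N < n /\
    exists (e : rel 'I_n) (V1 V2 : {set 'I_n}),
      [/\ simple_graph e, balanced_bipartite e V1 V2, min_degree_eq e k &
          forest_number_eq e (n %/ 2 + l)].
Proof.
move=> N; have [l_gt0 l_le2] : 0 < l /\ l <= 2 by case/orP: hl => /eqP ->.
pose m := N + 2 * k + 2; exists (m + m); split; first lia.
have lk_le_m : l * k <= m by rewrite (leq_trans (leq_mul l_le2 (leqnn k))) //; lia.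
have -> : (m + m) %/ 2 = m by rewrite addnn -muln2 mulnK.
exists (@bip_adj k l m), (ord_range _ 0 m), (ord_range _ m (m + m)); split.
- exact: bip_adj_simple.
- exact: bip_adj_balanced.
- by apply: bip_adj_min_degree => //; lia.
- by apply: bip_adj_forest_number => //; lia.
Qed.
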